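(* Let $\alpha>1$ and $n\ge1$. For $k\in[n]$ let $X_{k,n}$ be the $k$-th order statistic of $n$ i.i.d. random variables from the Pareto distribution $\mathcal{P}_\alpha$, and $Y_{k,n}$ the $k$-th order statistic of $n$ i.i.d. random variables from the Fréchet distribution $\mathcal{F}_\alpha$. Then $\mathbb{E}[Y_{k,n}]\le\mathbb{E}[X_{k,n}]+1$.
   Context: Pareto $\mathcal{P}_\alpha$: CDF $1-x^{-\alpha}$ for $x\ge1$; Fréchet $\mathcal{F}_\alpha$: CDF $e^{-1/x^\alpha}$ for $x\ge0$. The $k$-th order statistic is the $k$-th smallest value (same convention for both samples). *)

From HB Require Import structures.
From mathcomp Require Import all_boot all_order all_algebra.
From mathcomp Require Import all_classical all_reals all_analysis.
Set Implicit Arguments. Unset Strict Implicit. Unset Printing Implicit Defensive.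
Import Order.TTheory GRing.Theory Num.Theory.
Local Open Scope classical_set_scope.
Local Open Scope ring_scope.

Definition pareto_cdf {R : realType} (alpha x : R) : R :=
  if 1 <= x then 1 - x `^ (- alpha) else 0.

Definition frechet_cdf {R : realType} (alpha x : R) : R :=
  if 0 < x then expR (- x `^ (- alpha)) else 0.

Definition has_cdf {d} {T : measurableType d} {R : realType}
  (P : probability T R) (X : T -> R) (F : R -> R) : Prop :=
  measurable_fun setT X /\
  forall x : R, P (X @^-1` `]-oo, x]) = (F x)%:E.

Definition mutually_independent {d} {T : measurableType d} {R : realType}
  (P : probability T R) (n : nat) (X : 'I_n -> T -> R) : Prop :=
  forall B : 'I_n -> set R, (forall i, measurable (B i)) ->
    P (\bigcap_(i in [set: 'I_n]) (X i @^-1` B i)) =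
    (\prod_(i < n) P (X i @^-1` B i))%E.

Definition iid_with_cdf {d} {T : measurableType d} {R : realType}
  (P : probability T R) (n : nat) (X : 'I_n -> T -> R) (F : R -> R) : Prop :=
  mutually_independent P X /\ forall i, has_cdf P (X i) F.

Definition order_stat {T : Type} {R : realType} (n k : nat)
  (X : 'I_n -> T -> R) : T -> R :=
  fun w => nth 0 (sort <=%R [seq X i w | i <- enum 'I_n]) k.-1.

From HB Require Import structures.
From mathcomp Require Import all_boot all_order all_algebra.
From mathcomp Require Import all_classical all_reals all_analysis.
From mathcomp Require Import measurable_realfun lra.
Set Implicit Arguments. Unset Strict Implicit. Unset Printing Implicit Defensive.
Import Order.TTheory GRing.Theory Num.Theory.
Local Open Scope ring_scope.

(** Since [1 - u <= exp (-u)], the Pareto CDF lies below the Fréchet CDF. The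
    k-th order statistic of n i.i.d. variables with CDF F is at most t iff at
    least k of them are, an event of probability [atleast_prob k (fun=> F t)],
    and this is nondecreasing in the common success probability [F t]. *)

Lemma sum_setsD1 (V : nmodType) (n : nat) (j : 'I_n) (F : {set 'I_n} -> V) :
  \sum_(S : {set 'I_n}) F S = \sum_(S : {set 'I_n} | j \in S) (F S + F (S :\ j)).
Proof.
rewrite (bigID (fun S : {set 'I_n} => j \in S)) /= big_split /=; congr (_ + _).
rewrite (reindex_onto (fun S => S :\ j) (fun S => j |: S)) /=; last first.
  by move=> S jS; rewrite finset.setU1K.
apply: eq_bigl => S; rewrite !inE eqxx /=.
by apply/eqP/idP => [<- | jS]; [rewrite !inE eqxx | rewrite finset.setD1K].
Qed.

Section atleast_prob.
Variables (R : realDomainType) (n : nat).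
Implicit Types (p q : 'I_n -> R) (S : {set 'I_n}).

Definition pattern_prob p S : R :=
  \prod_(i < n) (if i \in S then p i else 1 - p i).

Definition atleast_prob (k : nat) p : R :=
  \sum_(S : {set 'I_n} | (k <= #|S|)%N) pattern_prob p S.

Lemma atleast_prob_le_coord k p q (j : 'I_n) :
  (forall i, i != j -> 0 <= p i <= 1) -> (forall i, i != j -> p i = q i) ->
  p j <= q j -> atleast_prob k p <= atleast_prob k q.
Proof.
move=> p01 epq lepq; rewrite /atleast_prob !(big_mkcond (fun S => k <= #|S|)%N).
(* Pair each S containing j with S :\ j: the pair contributes an affine
   function of p j whose slope is nonnegative, since #|S :\ j| < #|S|. *)
rewrite !(@sum_setsD1 _ _ j); apply: ler_sum => S jS.
pose rest (f : 'I_n -> R) :=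
  \prod_(i < n | i != j) (if i \in S then f i else 1 - f i).
have probS f : pattern_prob f S = f j * rest f.
  by rewrite /pattern_prob (bigD1 j) //= jS.
have probSj f : pattern_prob f (S :\ j) = (1 - f j) * rest f.
  rewrite /pattern_prob (bigD1 j) //= !inE eqxx /=; congr (_ * _).
  by apply: eq_bigr => i ij; rewrite !inE ij.
have erest : rest p = rest q by apply: eq_bigr => i ij; rewrite epq.
have rest_ge0 : 0 <= rest p.
  by apply: prodr_ge0 => i ij; have /andP[] := p01 i ij; case: ifP => _; lra.
have -> : #|S| = (#|S :\ j|).+1 by rewrite (cardsD1 j S) jS.
rewrite !probS !probSj -erest.
case: (leqP k #|S :\ j|) => [le_k | _]; first by rewrite (leqW le_k); nra.
by case: leqP => _; nra.
Qed.

Lemma atleast_prob_homo k p q :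
  (forall i, 0 <= p i) -> (forall i, p i <= q i) -> (forall i, q i <= 1) ->
  atleast_prob k p <= atleast_prob k q.
Proof.
move=> p0 pq q1.
pose hybrid m (i : 'I_n) := if (i < m)%N then q i else p i.
have hybrid01 m i : 0 <= hybrid m i <= 1.
  by rewrite /hybrid; have := pq i; have := p0 i; have := q1 i; case: ifP => _; lra.
suff : forall m, (m <= n)%N -> atleast_prob k p <= atleast_prob k (hybrid m).
  move=> /(_ n (leqnn n)); congr (_ <= atleast_prob k _).
  by apply/funext => i; rewrite /hybrid ltn_ord.
elim=> [_ | m IH lt_mn]; first exact: lexx.
apply: (le_trans (IH (ltnW lt_mn))).
apply: (@atleast_prob_le_coord k _ _ (Ordinal lt_mn)).
- by move=> i _; exact: hybrid01.
- move=> i ij; rewrite /hybrid [in RHS]ltnS [in RHS]leq_eqVlt.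
  have /negbTE -> // : nat_of_ord i != m.
  by apply: contra ij => /eqP ie; apply/eqP/val_inj.
- by rewrite /hybrid /= ltnn ltnSn.
Qed.

Lemma atleast_prob0 k p : (0 < k)%N -> (forall i, p i = 0) -> atleast_prob k p = 0.
Proof.
move=> k_gt0 p0; apply: big1 => S kS.
have /set0Pn[i iS] : S != finset.set0 by rewrite -card_gt0 (leq_trans k_gt0).
by rewrite /pattern_prob (bigD1 i) //= iS p0 mul0r.
Qed.

End atleast_prob.

Lemma sorted_nth_le (R : realDomainType) (s : seq R) k t : sorted <=%R s ->
  (0 < k <= size s)%N ->
  (nth 0 s k.-1 <= t) = (k <= count (fun x : R => (x <= t)%R) s)%N.
Proof.
elim: s k => [|x s IH] k //=; first by case: k => [|k]; rewrite ?ltnn /= ?andbF.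
move=> sorted_xs /andP[k_gt0 ks].
have x_min : all (fun y => x <= y) s by exact: order_path_min le_trans sorted_xs.
case: (leP x t) => xt.
  case: k k_gt0 ks => [//|[|k]] _ ks /=; first by rewrite xt.
  by rewrite add1n ltnS -IH // (path_sorted sorted_xs).
have -> : count (fun y : R => y <= t) s = 0%N.
  apply/eqP; rewrite -leqn0 leqNgt -has_count; apply/hasPn => y ys.
  by rewrite -ltNge (lt_le_trans xt) //; move/allP: x_min; apply.
rewrite add0n leqNgt k_gt0 /=; apply/negbTE; rewrite -ltNge.
case: k k_gt0 ks => [//|[|k]] _ ks //=.
by apply: (lt_le_trans xt); move/allP: x_min; apply; rewrite mem_nth // -ltnS.
Qed.

Lemma count_enum_ord (n : nat) (a : pred 'I_n) :
  count a (enum 'I_n) = #|[set i | a i]|.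
Proof.
rewrite cardE /enum_mem size_filter count_filter.
by apply: eq_count => i; rewrite !inE andbT.
Qed.

Lemma order_stat_le (T : Type) (R : realType) n k (X : 'I_n -> T -> R) w t :
  (0 < k <= n)%N ->
  (order_stat k X w <= t) = (k <= #|[set i | (X i w <= t)%R]|)%N.
Proof.
move=> kn; rewrite /order_stat sorted_nth_le.
- by rewrite (permP (permEl (perm_sort _ _))) count_map count_enum_ord.
- exact/sort_sorted/le_total.
- by rewrite size_sort size_map size_enum_ord.
Qed.

Local Open Scope classical_set_scope.

Section tail_formula.
Context d (T : measurableType d) (R : realType) (P : probability T R).

Lemma ae_ge0_expectation_ccdf (X : {RV P >-> R}) : {ae P, forall w, 0 <= X w} ->
  ('E_P[X] = \int[lebesgue_measure]_(r in `[0%R, +oo[) ccdf X r)%E.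
Proof.
move=> X_ge0.
have -> : ('E_P[X] = 'E_P[X^\+%R])%E.
  rewrite !unlock; apply: ae_eq_integral => //.
  - exact/measurable_EFinP.
  - exact/measurable_EFinP/measurable_funrpos.
  by apply: filterS X_ge0 => w Xw0 _; rewrite /funrpos max_l.
rewrite (@ge0_expectation_ccdf _ _ _ _ X^\+%R); last exact: funrpos_ge0.
apply: eq_integral => r; rewrite inE /= in_itv /= andbT => r0.
congr (P _); apply: eq_set => w /=.
by rewrite !in_itv /= !andbT lt_max (ltNge r 0) r0 orbF.
Qed.

Lemma cdf0_ae_ge0 (X : {RV P >-> R}) :
  cdf X 0 = 0%E -> {ae P, forall w, 0 <= X w}.
Proof.
move=> cdf0; exists (X @^-1` `]-oo, 0]); split => //.
- by rewrite -[_ @^-1` _]setTI; exact: measurable_funP.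
- by move=> w /= /negP; rewrite -ltNge in_itv /= => /ltW.
Qed.

End tail_formula.

Lemma ae_ge0_expectation_le_ccdf
  d1 (T1 : measurableType d1) d2 (T2 : measurableType d2) (R : realType)
  (P1 : probability T1 R) (P2 : probability T2 R)
  (X : {RV P1 >-> R}) (Y : {RV P2 >-> R}) :
  {ae P1, forall w, 0 <= X w} -> {ae P2, forall w, 0 <= Y w} ->
  (forall r, 0 <= r -> (ccdf Y r <= ccdf X r)%E) -> ('E_P2[Y] <= 'E_P1[X])%E.
Proof.
move=> X_ge0 Y_ge0 YX; rewrite !ae_ge0_expectation_ccdf //.
apply: ge0_le_integral => //.
- by apply: measurable_funTS; exact: ccdf_measurable.
- by apply: measurable_funTS; exact: ccdf_measurable.
- by move=> r /=; rewrite in_itv /= andbT; exact: YX.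
Qed.

Section iid_order_stat.
Context d (T : measurableType d) (R : realType) (P : probability T R).
Variables (n k : nat) (X : 'I_n -> T -> R) (F : R -> R).
Hypotheses (indepX : mutually_independent P X) (cdfX : forall i, has_cdf P (X i) F).
Hypothesis kn : (0 < k <= n)%N.

Let measurable_preimage i (B : set R) : measurable B -> measurable (X i @^-1` B).
Proof. by move=> mB; rewrite -[X i @^-1` _]setTI; exact: (cdfX i).1. Qed.

Definition pattern_event (S : {set 'I_n}) (t : R) : set T :=
  \bigcap_(i in [set: 'I_n])
    X i @^-1` (if i \in S then `]-oo, t] else `]t, +oo[).

Lemma pattern_eventE S t w :
  pattern_event S t w <-> S = [set i | (X i w <= t)%R]%SET.
Proof.
split => [Sw | -> i _ /=].
  apply/setP => i; rewrite inE; have := Sw i I.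
  by case: ifP => _; rewrite /= in_itv /= ?andbT; [move=> -> | move=> /lt_geF ->].
by rewrite inE; case: ifP => /=; rewrite in_itv /= ?andbT // => /negbT; rewrite -ltNge.
Qed.

Lemma measurable_pattern_event S t : measurable (pattern_event S t).
Proof.
apply: fin_bigcap_measurable => [|i _]; first exact: finite_finset.
by apply: measurable_preimage; case: ifP.
Qed.

Lemma prob_pattern_event S t :
  P (pattern_event S t) = (pattern_prob (fun _ => F t) S)%:E.
Proof.
rewrite /pattern_event indepX; last by move=> i; case: ifP.
rewrite /pattern_prob -prodEFin; apply: eq_bigr => i _.
have cdfXi : P (X i @^-1` `]-oo, t]) = (F t)%:E := (cdfX i).2 t.
case: ifP => _ //.
have mXi : measurable (X i @^-1` `]-oo, t]) by exact: measurable_preimage.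
by rewrite -setCitvl preimage_setC probability_setC // cdfXi EFinB.
Qed.

Lemma order_stat_le_preimage t : order_stat k X @^-1` `]-oo, t] =
  \bigcup_(S in [set S : {set 'I_n} | (k <= #|S|)%N]) pattern_event S t.
Proof.
apply/seteqP; split => w /=; rewrite in_itv /= order_stat_le //.
  by move=> kw; exists [set i | (X i w <= t)%R]%SET => //; exact/pattern_eventE.
by move=> [S /= kS /pattern_eventE eS]; rewrite -eS.
Qed.

Lemma measurable_order_stat : measurable_fun setT (order_stat k X).
Proof.
apply: (measurability _ (RGenOInfty.measurableE R)) => // _ [_ [x ->] <-].
have : measurable (order_stat k X @^-1` `]-oo, x]).
  rewrite order_stat_le_preimage; apply: fin_bigcup_measurable => [|S _].
    exact: finite_finset.
  exact: measurable_pattern_event.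
by rewrite setTI -setCitvl preimage_setC => /measurableC.
Qed.

Definition order_stat_RV : {RV P >-> R} :=
  mfun_Sub (mem_set measurable_order_stat).

Lemma cdf_order_stat t :
  cdf order_stat_RV t = (atleast_prob k (fun _ : 'I_n => F t))%:E.
Proof.
rewrite /cdf /distribution /pushforward /= order_stat_le_preimage.
rewrite measure_fin_bigcup //; last 3 first.
- exact: finite_finset.
- move=> S S' _ _ [w [/pattern_eventE -> /pattern_eventE ->]] //.
- by move=> S _; exact: measurable_pattern_event.
rewrite -(@bigfs _ _ _ _ (enum {set 'I_n}) (fun S => k <= #|S|)%N) ?enum_uniq //;
  last by move=> S _; rewrite mem_enum.
rewrite big_enum_cond /atleast_prob -sumEFin; apply: eq_bigr => S _.
exact: prob_pattern_event.
Qed.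

End iid_order_stat.

Lemma has_cdf_bounds d (T : measurableType d) (R : realType) (P : probability T R)
  (Z : T -> R) (F : R -> R) r : has_cdf P Z F -> 0 <= F r <= 1.
Proof.
move=> [mZ cdfZ]; have mZr : measurable (Z @^-1` `]-oo, r]).
  by rewrite -[_ @^-1` _]setTI; exact: mZ.
by rewrite -!lee_fin -cdfZ measure_ge0 probability_le1.
Qed.

Lemma pareto_cdf_le_frechet_cdf (R : realType) (alpha x : R) :
  pareto_cdf alpha x <= frechet_cdf alpha x.
Proof.
rewrite /pareto_cdf /frechet_cdf; case: ifP => [x_ge1 | _].
  rewrite (lt_le_trans ltr01 x_ge1).
  have := expR_ge1Dx (- x `^ (- alpha)); lra.
by case: ifP => _; rewrite ?expR_ge0.
Qed.

Lemma order_stat_expectation_le (R : realType) (n k : nat)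
  d1 (T1 : measurableType d1) (P1 : probability T1 R) (X : 'I_n -> T1 -> R)
  d2 (T2 : measurableType d2) (P2 : probability T2 R) (Y : 'I_n -> T2 -> R)
  (F G : R -> R) :
  (0 < k <= n)%N -> F 0 = 0 -> G 0 = 0 -> (forall r, 0 <= r -> F r <= G r) ->
  iid_with_cdf P1 X F -> iid_with_cdf P2 Y G ->
  ('E_P2[order_stat k Y] <= 'E_P1[order_stat k X])%E.
Proof.
move=> kn F0 G0 FG [indepX cdfX] [indepY cdfY].
have /andP[k_gt0 k_le_n] := kn.
pose i0 : 'I_n := Ordinal (leq_trans k_gt0 k_le_n).
pose ZX := order_stat_RV cdfX kn; pose ZY := order_stat_RV cdfY kn.
apply: (@ae_ge0_expectation_le_ccdf _ _ _ _ _ _ _ ZX ZY).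
- by apply: cdf0_ae_ge0; rewrite cdf_order_stat // atleast_prob0.
- by apply: cdf0_ae_ge0; rewrite cdf_order_stat // atleast_prob0.
move=> r r0; rewrite !ccdf_1_cdf !cdf_order_stat //; apply: leeB => //.
have /andP[Fr0 _] := has_cdf_bounds r (cdfX i0).
have /andP[_ Gr1] := has_cdf_bounds r (cdfY i0).
by rewrite lee_fin; apply: atleast_prob_homo => _; [| exact: FG |].
Qed.

Theorem lemma18 (R : realType) (alpha : R) (n k : nat)
  (d1 : measure_display) (T1 : measurableType d1) (P1 : probability T1 R)
  (X : 'I_n -> T1 -> R)
  (d2 : measure_display) (T2 : measurableType d2) (P2 : probability T2 R)
  (Y : 'I_n -> T2 -> R) :
  1 < alpha -> (1 <= n)%N -> (1 <= k <= n)%N ->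
  iid_with_cdf P1 X (pareto_cdf alpha) ->
  iid_with_cdf P2 Y (frechet_cdf alpha) ->
  ('E_P2[order_stat k Y] <= 'E_P1[order_stat k X] + 1%:E)%E.
Proof.
move=> _ _ kn iidX iidY.
rewrite -[X in (X <= _)%E]adde0; apply: leeD; last exact: lee01.
apply: (order_stat_expectation_le kn _ _ _ iidX iidY).
- by rewrite /pareto_cdf ler10.
- by rewrite /frechet_cdf ltxx.
- by move=> r _; exact: pareto_cdf_le_frechet_cdf.
Qed.
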